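(* The map $\mathrm{Trns}_\mu$, restricted to $\Lambda_W^\mu\times\mathcal A$, is injective.
   Context: Let $\underline{G}=(\mathrm{Res}_{\mathbb{F}_{p^f}/\mathbb{F}_p}\mathrm{GL}_3)\times\mathbb{F}\cong\mathrm{GL}_3^f$ with diagonal torus $\underline T$, $X^*(\underline T)\cong(\mathbb{Z}^3)^f$, $\eta=((1,0,-1))_i$, $\pi$ the Frobenius shift $(\pi\lambda)_i=\lambda_{i-1}$, $\mu\in X^*(\underline T)$. Let $\Lambda_W\supset\Lambda_R$ be the weight and root lattices of $\mathrm{SL}_3^f$, $\lambda\mapsto\overline\lambda$ restriction $X^*(\underline T)\to\Lambda_W$ with kernel $X^0(\underline T)$, $\mathrm{can}$ the canonical embedding of $\Lambda_R$ in $X^*(\underline T)$ (characters trivial on the center), $\mathrm{sec}:\Lambda_W\to X^*(\underline T)$ a section. Using the $p$-dot action $t_\lambda w\cdot\mu=p\lambda+w(\mu+\eta)-\eta$, let $\underline A$ be the lowest dominant $p$-restricted alcove, $\mathcal A=\{A,B\}^f$ the dominant $p$-restricted alcoves, $\widetilde{\underline W}^{+,\mathrm{der}}_1$ the elements $wt_{-\pi^{-1}\omega}$ of $\Lambda_W\rtimes S_3^f$ taking $\underline A$ into $\mathcal A$. Writing uniquely elements of $\Lambda_W\times\mathcal A$ as $(\omega+\nu,\pi wt_{-\pi^{-1}\omega}\cdot\underline A)$ with $\nu\in\Lambda_R$, define $\mathrm{Trns}_\mu(\omega+\nu,\pi wt_{-\pi^{-1}\omega}\cdot\underline A)=wt_{-\pi^{-1}\mathrm{sec}(\omega)}\cdot(\mu-\eta+\mathrm{can}(\nu)+\mathrm{sec}(\omega))\in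 X^*(\underline T)/(p-\pi)X^0(\underline T)$, and $\Lambda_W^\mu=\{\omega\in\Lambda_W:\omega+\overline{\mu-\eta}\in\underline A\}$. *)

From HB Require Import structures.
From mathcomp Require Import all_boot all_order all_algebra all_fingroup.
Set Implicit Arguments. Unset Strict Implicit. Unset Printing Implicit Defensive.
Import Order.TTheory GRing.Theory Num.Theory.
Local Open Scope ring_scope.

(* X^*(T) for GL_3^f (with coefficients in R): f x 3 matrices, row i is the
   i-th GL_3 factor.  X^*(T) itself is R = int; X^*(T) (x) Q is R = rat. *)
Notation Xc R f := 'M[R]_(f, 3).

Definition i0 : 'I_3 := @Ordinal 3 0 isT.
Definition i1 : 'I_3 := @Ordinal 3 1 isT.
Definition i2 : 'I_3 := @Ordinal 3 2 isT.

Definition eta {R : pzRingType} (f : nat) : Xc R f :=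
  \matrix_(i < f, j < 3) (1 - (nat_of_ord j)%:R).

(* Frobenius shift (pi lam)_i = lam_{i-1} (indices mod f) and its inverse *)
Definition piM {R : pzRingType} (f : nat) (A : Xc R f) : Xc R f :=
  \matrix_(i < f, j < 3) A (ord_pred i) j.
Definition piinv {R : pzRingType} (f : nat) (A : Xc R f) : Xc R f :=
  \matrix_(i < f, j < 3) A (ordS i) j.

(* S_3^f acting on X^*(T): w permutes the coordinates of each factor,
   (w lam)_{i, w_i(j)} = lam_{i,j} *)
Definition Wf (f : nat) := {ffun 'I_f -> 'S_3}.
Definition wact {R : pzRingType} (f : nat) (w : Wf f) (A : Xc R f) : Xc R f :=
  \matrix_(i < f, j < 3) A i ((w i)^-1%g j).

(* p-dot action of the element  w t_nu :
   w t_nu . x = w (t_nu . x) = w(p nu + x + eta) - eta *)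
Definition wt_dot {R : pzRingType} (p f : nat) (w : Wf f) (nu x : Xc R f)
  : Xc R f :=
  wact w (p%:R *: nu + x + eta f) - eta f.

(* X^0(T): kernel of the restriction X^*(T) -> Lambda_W, i.e. characters
   constant on each factor (multiples of (1,1,1) in each factor). *)
Definition inX0 {R : pzRingType} (f : nat) (d : Xc R f) : Prop :=
  forall (i : 'I_f) (j k : 'I_3), d i j = d i k.

(* Elements of Lambda_W are represented by lifts in X^*(T); two lifts
   represent the same element of Lambda_W iff they differ by X^0(T). *)
Definition eqLW (f : nat) (a b : Xc int f) : Prop := inX0 (a - b).

(* Characters trivial on the center of GL_3^f: the image of can : Lambda_R -> X^*(T) *)
Definition trivial_on_center (f : nat) (nu : Xc int f) : Prop :=
  forall i : 'I_f, \sum_(j < 3) nu i j = 0.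

(* Equality in X^*(T) / (p - pi) X^0(T) *)
Definition eq_mod_pX0 (p f : nat) (a b : Xc int f) : Prop :=
  exists d : Xc int f, inX0 d /\ a - b = p%:Z *: d - piM d.

(* Alcoves (p-dot action), as sets of rational points of X^*(T) (x) Q
   (they are invariant under X^0 (x) Q, so they are alcoves of Lambda_W (x) Q).
   Lowest alcove A (in factor i): 0 < <x+eta, a1^v>, 0 < <x+eta, a2^v>,
   <x+eta, a0^v> < p;  upper restricted alcove B:  <x+eta,a1^v> < p,
   <x+eta,a2^v> < p, p < <x+eta,a0^v>.  (a1 = e1-e2, a2 = e2-e3, a0 = e1-e3) *)
Definition lowerA (p f : nat) (i : 'I_f) (x : Xc rat f) : Prop :=
  let y := x + eta f in
  0 < y i i0 - y i i1 /\ 0 < y i i1 - y i i2 /\ y i i0 - y i i2 < p%:R.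
Definition upperB (p f : nat) (i : 'I_f) (x : Xc rat f) : Prop :=
  let y := x + eta f in
  y i i0 - y i i1 < p%:R /\ y i i1 - y i i2 < p%:R /\ p%:R < y i i0 - y i i2.

(* The alcove of \mathcal A = {A,B}^f indexed by c (c i = true means B). *)
Definition alc (p f : nat) (c : {ffun 'I_f -> bool}) (x : Xc rat f) : Prop :=
  forall i : 'I_f, if c i then upperB p i x else lowerA p i x.

Definition lowest_alc (p f : nat) : Xc rat f -> Prop := alc p [ffun _ => false].

Definition image_is (T : Type) (g : T -> T) (P Q : T -> Prop) : Prop :=
  forall x, Q x <-> exists y, P y /\ x = g y.

Definition wt_elt (p f : nat) (w : Wf f) (om : Xc int f) : Xc rat f -> Xc rat f :=
  wt_dot p w (map_mx intr (- piinv om)).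

(* w t_{-pi^{-1} om} lies in \widetilde W^{+,der}_1 : it takes \underline A into \mathcal A *)
Definition in_Wtilde1 (p f : nat) (w : Wf f) (om : Xc int f) : Prop :=
  exists c' : {ffun 'I_f -> bool},
    image_is (wt_elt p w om) (@lowest_alc p f) (alc p c').

(* (om', C) = (om + nu, pi w t_{-pi^{-1} om} . \underline A) with
   nu in Lambda_R (here given directly through can(nu) in X^*(T)) and
   w t_{-pi^{-1} om} in \widetilde W^{+,der}_1. *)
Definition Trns_decomp (p f : nat) (om' : Xc int f) (c : {ffun 'I_f -> bool})
  (w : Wf f) (om nu : Xc int f) : Prop :=
  [/\ trivial_on_center nu, eqLW om' (om + nu), in_Wtilde1 p w om
    & image_is (fun y => piM (wt_elt p w om y)) (@lowest_alc p f) (alc p c)].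

(* Trns_mu value for such a decomposition (a representative in X^*(T) of
   its class in X^*(T) / (p - pi) X^0(T)):
   w t_{-pi^{-1} sec(om)} . (mu - eta + can(nu) + sec(om)) *)
Definition Trns_val (p f : nat) (mu : Xc int f) (sec : Xc int f -> Xc int f)
  (w : Wf f) (om nu : Xc int f) : Xc int f :=
  wt_dot p w (- piinv (sec om)) (mu - eta f + nu + sec om).

Definition in_LambdaW_mu (p f : nat) (mu om : Xc int f) : Prop :=
  @lowest_alc p f (map_mx intr (om + mu - eta f)).

From Pilot Require Import Defs.
From HB Require Import structures.
From mathcomp Require Import all_boot all_order all_algebra all_fingroup zify ring lra.
Set Implicit Arguments.
Unset Strict Implicit.
Unset Printing Implicit Defensive.
Import Order.TTheory GRing.Theory Num.Theory.
Local Open Scope ring_scope.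

(* Write s_k = sec(om_k) and y_k = mu + nu_k + s_k.  In the i-th factor,
   Trns_mu takes the value w_k(p l_k + y_k) - eta with l_k = -s_k(i+1), and
   y_k - eta lies, up to X^0, in the lowest alcove because om'_k + mu - eta
   does.
   Summing coordinates in T_1 - T_2 = (p - pi) d gives, for the row sums R
   of s_1 - s_2, the recursion R_i + 3 d_(i-1) = p (R_(i+1) + 3 d_i); going
   around the Frobenius cycle, the left-hand side is divisible by every power
   of p, so it vanishes and 3 | R.  In each factor p (l_1 o u - l_2) +
   (y_1 o u - y_2) is then constant for a permutation u; as the alcove has
   width p, the entries of l_1 o u - l_2 are within 1 of each other and sum
   to a multiple of 3, so they are equal.  Thus y_1 o u - y_2 is constant,
   which forces u = 1 and y_1 = y_2 modulo X^0, i.e. om'_1 = om'_2 in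
   Lambda_W.  Finally the alcove pi w_k t_(-pi^-1 om_k) . A is read off from
   the shift by pi of T_k modulo X^0, and two alcoves of {A, B}^f differing
   by X^0 coincide. *)

Lemma eq0_of_scaled_orbit (T : Type) (g : T -> T) (p : nat) (v : T -> int) :
  (1 < p)%N -> (forall x, v x = p%:Z * v (g x)) -> forall x, v x = 0.
Proof.
move=> p_gt1 v_scaled.
have dvd_pow n x : (p ^ n %| `|v x|)%N.
  elim: n x => [|n IHn] x; first by rewrite expn0 dvd1n.
  by rewrite v_scaled abszM expnS absz_nat dvdn_mul.
move=> x; apply/eqP; rewrite -absz_eq0; apply/negPn/negP; rewrite -lt0n => vx_gt0.
by have := dvdn_leq vx_gt0 (dvd_pow `|v x|%N x); rewrite leqNgt ltn_expl.
Qed.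

Lemma dvd_sum_close_const (n : nat) (m : 'I_n -> int) :
  (forall j k, m j - m k <= 1) -> (n%:Z %| \sum_j m j)%Z -> forall j k, m j = m k.
Proof.
move=> close /dvdzP[q sum_m].
suff mq j : m j = q by move=> j k; rewrite !mq.
have n_gt0 : (0 < n)%N by apply: leq_ltn_trans (ltn_ord j).
have others : #|predC1 j| = n.-1 by rewrite cardC1 card_ord.
have E : n%:Z * (m j - q) = \sum_(k | k != j) (m j - m k).
  rewrite (bigD1 j) //= in sum_m.
  rewrite sumrB sumr_const others.
  have -> : \sum_(k | k != j) m k = q * n - m j by rewrite -sum_m addrC addrK.
  rewrite -mulr_natr natz predn_int //; ring.
have ub : \sum_(k | k != j) (m j - m k) <= (n.-1)%:Z.
  apply: le_trans (ler_sum _ (fun k _ => close j k)) _.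
  by rewrite sumr_const others -natz.
have lb : - (n.-1)%:Z <= \sum_(k | k != j) (m j - m k).
  apply: le_trans _ (ler_sum _ (fun k _ => _ : - 1 <= m j - m k)) => [|k _].
    by rewrite sumr_const others mulNrn natz.
  by rewrite lerNl opprB close.
move: ub lb; rewrite predn_int // -E; nia.
Qed.

Lemma homo_ltn_perm_eq1 (n : nat) (u : 'S_n) : {homo u : j k / (j < k)%N} -> u = 1%g.
Proof.
move=> u_incr.
pose ltI := fun j k : 'I_n => (j < k)%N.
have ltI_sorted : sorted ltI (enum 'I_n).
  by rewrite -(sorted_map (f := val) (e' := ltn)) val_enum_ord iota_ltn_sorted.
have u_enum : map u (enum 'I_n) = enum 'I_n.
  apply: (@irr_sorted_eq _ ltI) => //.
  - by move=> ? ? ?; apply: ltn_trans.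
  - by move=> j; apply: ltnn.
  - exact: (homo_sorted (e := ltI) (e' := ltI) u_incr).
  - by move=> j; rewrite mem_enum; apply/mapP; exists (u^-1 j)%g; rewrite ?mem_enum ?permKV.
apply/permP => j; rewrite perm1.
have := congr1 (nth j ^~ j) u_enum.
by rewrite /= (nth_map j) ?size_enum_ord // !nth_ord_enum.
Qed.

(* [y] stands for [x + eta] restricted to one GL_n factor, [x] in the lowest
   alcove. *)
Definition lowest_alcove_row (p : int) {n : nat} (y : 'I_n -> int) : Prop :=
  forall j k : 'I_n, (j < k)%N -> 0 < y j - y k < p.

Lemma lowest_alcove_row_dist p n (y : 'I_n -> int) :
  0 < p -> lowest_alcove_row p y -> forall j k, y j - y k < p.
Proof.
move=> p_gt0 y_low j k; case: (ltngtP j k) => [jk|kj|/val_inj->].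
- by case/andP: (y_low _ _ jk); lia.
- by case/andP: (y_low _ _ kj); lia.
- by rewrite subrr.
Qed.

Lemma lowest_alcove_row_rigid n (p C : int) (a b : 'S_n) (l1 l2 y1 y2 : 'I_n -> int) :
  0 < p -> lowest_alcove_row p y1 -> lowest_alcove_row p y2 ->
  (forall j, p * l1 (a j) + y1 (a j) - (p * l2 (b j) + y2 (b j)) = C) ->
  (n%:Z %| \sum_j l1 j - \sum_j l2 j)%Z ->
  forall j k, y1 j - y2 j = y1 k - y2 k.
Proof.
move=> p_gt0 y1_low y2_low E dvd_l.
pose u := (b^-1 * a)%g; pose m j := l1 (u j) - l2 j.
have Eu j : p * m j + (y1 (u j) - y2 j) = C.
  by have := E (b^-1 j)%g; rewrite permKV /m /u permM mulrBr; lia.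
have m_close j k : m j - m k <= 1.
  have := Eu j; have := Eu k.
  have := lowest_alcove_row_dist p_gt0 y1_low (u k) (u j).
  have := lowest_alcove_row_dist p_gt0 y2_low j k.
  nia.
have sum_m : \sum_j m j = \sum_j l1 j - \sum_j l2 j.
  by rewrite sumrB [in RHS](reindex_inj (@perm_inj _ u)).
have m_const := dvd_sum_close_const m_close (etrans (congr1 _ sum_m) dvd_l).
have shift j k : y1 (u j) - y2 j = y1 (u k) - y2 k.
  by have := Eu j; have := Eu k; rewrite (m_const j k); lia.
have u1 : u = 1%g.
  apply: homo_ltn_perm_eq1 => j k jk.
  have /andP[+ _] := y2_low _ _ jk; have := shift j k.
  case: (ltngtP (u j) (u k)) => // [ukj|/val_inj->]; last by lia.
  by case/andP: (y1_low _ _ ukj); lia.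
by move=> j k; have := shift j k; rewrite u1 !perm1.
Qed.

Lemma ord3_cases (j : 'I_3) : [\/ j = i0, j = i1 | j = i2].
Proof.
by case: j => [[|[|[|//]]] ?]; [apply: Or31 | apply: Or32 | apply: Or33]; apply: val_inj.
Qed.

Lemma lowest_alcove_row3 (p : int) (y : 'I_3 -> int) :
  0 < y i0 - y i1 -> 0 < y i1 - y i2 -> y i0 - y i2 < p -> lowest_alcove_row p y.
Proof.
move=> y01 y12 y02 j k.
by case: (ord3_cases j) => ->; case: (ord3_cases k) => -> //= _; lia.
Qed.

Section CharactersTrivialOnTori.

Variables (R : pzRingType) (f : nat).
Implicit Types x y : Xc R f.

Lemma inX00 : inX0 (0 : Xc R f).
Proof. by move=> i j k; rewrite !mxE. Qed.

Lemma inX0D x y : inX0 x -> inX0 y -> inX0 (x + y).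
Proof. by move=> x0 y0 i j k; rewrite !mxE (x0 i j k) (y0 i j k). Qed.

Lemma inX0N x : inX0 x -> inX0 (- x).
Proof. by move=> x0 i j k; rewrite !mxE (x0 i j k). Qed.

Lemma inX0Z c x : inX0 x -> inX0 (c *: x).
Proof. by move=> x0 i j k; rewrite !mxE (x0 i j k). Qed.

Lemma inX0_wact (w : Wf f) x : inX0 x -> inX0 (wact w x).
Proof. by move=> x0 i j k; rewrite !mxE. Qed.

Lemma inX0_piM x : inX0 x -> inX0 (piM x).
Proof. by move=> x0 i j k; rewrite !mxE. Qed.

Lemma inX0_map (S : pzRingType) (g : R -> S) x : inX0 x -> inX0 (map_mx g x).
Proof. by move=> x0 i j k; rewrite !mxE (x0 i j k). Qed.

End CharactersTrivialOnTori.

Section CongruenceModX0.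

Variable f : nat.
Implicit Types a b c d : Xc int f.

Lemma eqLWP a b : eqLW a b <-> forall i j k, a i j - b i j = a i k - b i k :> int.
Proof. by split=> ab i j k; have := ab i j k; rewrite !mxE. Qed.

Lemma eqLW_refl a : eqLW a a.
Proof. by rewrite /eqLW subrr; apply: inX00. Qed.

Lemma eqLW_sym a b : eqLW a b -> eqLW b a.
Proof. by move=> ab; rewrite /eqLW -opprB; apply: inX0N. Qed.

Lemma eqLW_trans b a c : eqLW a b -> eqLW b c -> eqLW a c.
Proof. by move=> ab bc; rewrite /eqLW -[a](subrK b) -addrA; apply: inX0D. Qed.

Lemma eqLW_add a b c d : eqLW a b -> eqLW c d -> eqLW (a + c) (b + d).
Proof. by move=> ab cd; rewrite /eqLW opprD addrACA; apply: inX0D. Qed.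

Lemma eqLW_add2l a b c : eqLW (a + b) (a + c) -> eqLW b c.
Proof. by rewrite /eqLW opprD addrACA subrr add0r. Qed.

Lemma eqLW_add2r a b c : eqLW (a + c) (b + c) -> eqLW a b.
Proof. by rewrite /eqLW opprD addrACA subrr addr0. Qed.

Lemma eqLW_opp a b : eqLW a b -> eqLW (- a) (- b).
Proof. by move=> ab; rewrite /eqLW -opprD; apply: inX0N. Qed.

Lemma eqLW_piinv a b : eqLW a b -> eqLW (piinv a) (piinv b).
Proof. by move=> ab i j k; have := ab (ordS i) j k; rewrite !mxE. Qed.

Lemma eqLW_piM a b : eqLW a b -> eqLW (piM a) (piM b).
Proof. by move=> ab i j k; have := ab (ord_pred i) j k; rewrite !mxE. Qed.

Lemma wt_dotB p (w : Wf f) a b c d :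
  wt_dot p w a c - wt_dot p w b d = wact w (p%:R *: (a - b) + (c - d)).
Proof. by apply/matrixP => i j; rewrite !mxE; ring. Qed.

Lemma eqLW_wt_dot p (w : Wf f) a b c d :
  eqLW a b -> eqLW c d -> eqLW (wt_dot p w a c) (wt_dot p w b d).
Proof. by move=> ab cd; rewrite /eqLW wt_dotB; apply/inX0_wact/inX0D/cd/inX0Z. Qed.

Lemma eq_mod_pX0_eqLW p a b : eq_mod_pX0 p a b -> eqLW a b.
Proof. by case=> d [d0 ab]; rewrite /eqLW ab; apply/inX0D/inX0N/inX0_piM/d0/inX0Z. Qed.

End CongruenceModX0.

Lemma lowest_alcove_row_eqLW f (q : int) (y y' : Xc int f) i :
  eqLW y y' -> lowest_alcove_row q (y i) -> lowest_alcove_row q (y' i).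
Proof.
move=> /eqLWP yy' y_low j k jk.
by case/andP: (y_low j k jk); have := yy' i j k; lia.
Qed.

Definition row_sum {f : nat} (A : Xc int f) (i : 'I_f) : int := \sum_j A i j.

Section RowSums.

Variable f : nat.
Implicit Types A B : Xc int f.

Lemma row_sumD A B i : row_sum (A + B) i = row_sum A i + row_sum B i.
Proof. by rewrite /row_sum -big_split; apply: eq_bigr => j _; rewrite mxE. Qed.

Lemma row_sumN A i : row_sum (- A) i = - row_sum A i.
Proof. by rewrite /row_sum -sumrN; apply: eq_bigr => j _; rewrite mxE. Qed.

Lemma row_sumB A B i : row_sum (A - B) i = row_sum A i - row_sum B i.
Proof. by rewrite row_sumD row_sumN. Qed.

Lemma row_sumZ c A i : row_sum (c *: A) i = c * row_sum A i.
Proof. by rewrite /row_sum mulr_sumr; apply: eq_bigr => j _; rewrite mxE. Qed.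

Lemma row_sum_wact (w : Wf f) A i : row_sum (wact w A) i = row_sum A i.
Proof.
rewrite /row_sum (reindex_inj (@perm_inj _ (w i))).
by apply: eq_bigr => j _; rewrite mxE permK.
Qed.

Lemma row_sum_piinv A i : row_sum (piinv A) i = row_sum A (ordS i).
Proof. by apply: eq_bigr => j _; rewrite mxE. Qed.

Lemma row_sum_piM A i : row_sum (piM A) i = row_sum A (ord_pred i).
Proof. by apply: eq_bigr => j _; rewrite mxE. Qed.

Lemma row_sum_X0 A i : inX0 A -> row_sum A i = 3 * A i i0.
Proof.
move=> A0; rewrite /row_sum (eq_bigr (fun=> A i i0)) => [|j _]; last exact: A0.
by rewrite sumr_const card_ord mulr_natl.
Qed.

Lemma row_sum_eta i : row_sum (Defs.eta f : Xc int f) i = 0.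
Proof. by rewrite /row_sum !big_ord_recr big_ord0 /= !mxE. Qed.

Lemma row_sum_wt_dot p (w : Wf f) nu x i :
  row_sum (wt_dot p w nu x) i = p%:R * row_sum nu i + row_sum x i.
Proof. by rewrite /wt_dot row_sumB row_sum_wact !row_sumD row_sumZ addrK. Qed.

End RowSums.

Section Alcoves.

Variables (p f : nat).

Lemma map_intr_eta : map_mx intr (Defs.eta f) = Defs.eta f :> Xc rat f.
Proof. by apply/matrixP => i j; rewrite !mxE rmorphB rmorph1 rmorph_nat. Qed.

Lemma lowest_alc_row (x : Xc int f) :
  lowest_alc p (map_mx intr (x - Defs.eta f)) -> forall i, lowest_alcove_row p%:Z (x i).
Proof.
move=> x_low i; have := x_low i; rewrite ffunE /lowerA map_mxB map_intr_eta subrK.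
rewrite !mxE -!rmorphB /= -[p%:R]/((p%:Z)%:~R) !ltr0z !ltr_int.
by case=> [x01 [x12 x02]]; apply: lowest_alcove_row3.
Qed.

Lemma in_LambdaW_mu_row (mu om' x : Xc int f) :
  in_LambdaW_mu p mu om' -> eqLW om' x -> forall i, lowest_alcove_row p%:Z ((mu + x) i).
Proof.
move=> om'_low om'x i; apply: lowest_alcove_row_eqLW (lowest_alc_row om'_low i).
by rewrite [mu + x]addrC; apply: eqLW_add om'x (eqLW_refl mu).
Qed.

(* Only the wall <x + eta, a0^v> = p separates the alcoves A and B. *)
Lemma alc_X0_eq (c1 c2 : {ffun 'I_f -> bool}) (z1 z2 : Xc rat f) :
  alc p c1 z1 -> alc p c2 z2 -> inX0 (z1 - z2) -> c1 = c2.
Proof.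
move=> z1_alc z2_alc z12; apply/ffunP => i.
have := z1_alc i; have := z2_alc i; have := z12 i i0 i2.
by rewrite /upperB /lowerA !mxE; case: (c1 i) (c2 i) => [] [] //= z02 [_ [_ ?]] [_ [_ ?]]; lra.
Qed.

Lemma piM_wt_elt_intr (w : Wf f) om (x : Xc int f) :
  piM (wt_elt p w om (map_mx intr x)) = map_mx intr (piM (wt_dot p w (- piinv om) x)).
Proof.
apply/matrixP => i j; rewrite !mxE.
by rewrite !(rmorphB, rmorphD, rmorphN, rmorphM, rmorph1, rmorph_nat).
Qed.

End Alcoves.

Section Translation.

Variables (p f : nat) (mu : Xc int f) (sec : Xc int f -> Xc int f).

Lemma Trns_valE (w : Wf f) om nu :
  Trns_val p mu sec w om nu =
  wact w (p%:Z *: - piinv (sec om) + (mu + (nu + sec om))) - Defs.eta f.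
Proof.
rewrite /Trns_val /wt_dot natz; congr (wact w _ - _).
by apply/matrixP => i j; rewrite !mxE; ring.
Qed.

Lemma row_sum_Trns_val (w : Wf f) om nu i : trivial_on_center nu ->
  row_sum (Trns_val p mu sec w om nu) i =
  row_sum mu i + row_sum (sec om) i - p%:Z * row_sum (sec om) (ordS i).
Proof.
move=> nu0; rewrite row_sum_wt_dot !(row_sumD, row_sumN) row_sum_piinv.
by rewrite [row_sum nu i]nu0 row_sum_eta natz; lia.
Qed.

Lemma dvd3_row_sum_sec (w1 w2 : Wf f) om1 om2 nu1 nu2 :
  (1 < p)%N -> trivial_on_center nu1 -> trivial_on_center nu2 ->
  eq_mod_pX0 p (Trns_val p mu sec w1 om1 nu1) (Trns_val p mu sec w2 om2 nu2) ->
  forall i, (3 %| row_sum (sec om1) i - row_sum (sec om2) i)%Z.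
Proof.
move=> p_gt1 nu1_0 nu2_0 [d [d0 T12]].
pose R i := row_sum (sec om1) i - row_sum (sec om2) i.
have R_rec i : R i - p%:Z * R (ordS i) = 3 * (p%:Z * d i i0 - d (ord_pred i) i0).
  have := congr1 (row_sum ^~ i) T12; rewrite /= row_sumB !row_sum_Trns_val // row_sumB.
  by rewrite row_sumZ row_sum_piM !(row_sum_X0 _ d0) /R; nia.
have R_d : forall i, R i + 3 * d (ord_pred i) i0 = 0.
  apply: (eq0_of_scaled_orbit (g := @ordS f)) p_gt1 _ => i.
  by have := R_rec i; rewrite ordSK; nia.
by move=> i; apply/dvdzP; exists (- d (ord_pred i) i0); have := R_d i; rewrite /R; lia.
Qed.

Lemma lowest_alcove_rigid (q : int) (w1 w2 : Wf f) (l1 l2 y1 y2 : Xc int f) :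
  0 < q -> (forall i, lowest_alcove_row q (y1 i)) ->
  (forall i, lowest_alcove_row q (y2 i)) ->
  (forall i, (3 %| row_sum l1 i - row_sum l2 i)%Z) ->
  eqLW (wact w1 (q *: l1 + y1)) (wact w2 (q *: l2 + y2)) -> eqLW y1 y2.
Proof.
move=> q_gt0 y1_low y2_low dvd_l /eqLWP W12; apply/eqLWP => i.
pose C := wact w1 (q *: l1 + y1) i i0 - wact w2 (q *: l2 + y2) i i0.
apply: (@lowest_alcove_row_rigid 3 q C ((w1 i)^-1)%g ((w2 i)^-1)%g (l1 i) (l2 i))
  q_gt0 (y1_low i) (y2_low i) _ (dvd_l i).
by move=> j; have := W12 i j i0; rewrite /C !mxE.
Qed.

Hypothesis sec_section : forall om, eqLW (sec om) om.

Lemma eqLW_decomp_sec om' om nu : eqLW om' (om + nu) -> eqLW om' (nu + sec om).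
Proof.
move=> om'_dec; apply: eqLW_trans om'_dec _.
by rewrite addrC; apply: eqLW_add (eqLW_refl nu) (eqLW_sym (sec_section om)).
Qed.

Lemma eqLW_Trns_val_wt_dot (w : Wf f) om' om nu : eqLW om' (om + nu) ->
  eqLW (Trns_val p mu sec w om nu) (wt_dot p w (- piinv om) (om' + mu - Defs.eta f)).
Proof.
move=> /eqLW_decomp_sec om'_dec; apply: eqLW_wt_dot.
  exact/eqLW_opp/eqLW_piinv/sec_section.
have -> : mu - Defs.eta f + nu + sec om = nu + sec om + (mu - Defs.eta f).
  by rewrite -addrA addrC.
by rewrite -[om' + mu - _]addrA; apply: eqLW_add (eqLW_sym om'_dec) (eqLW_refl _).
Qed.

End Translation.

Lemma alc_Trns_decomp p f (mu om' : Xc int f) c (w : Wf f) om nu :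
  in_LambdaW_mu p mu om' -> Trns_decomp p om' c w om nu ->
  alc p c (map_mx intr (piM (wt_dot p w (- piinv om) (om' + mu - Defs.eta f)))).
Proof.
move=> om'_low [_ _ _ img]; rewrite -piM_wt_elt_intr.
by apply/img; exists (map_mx intr (om' + mu - Defs.eta f)).
Qed.

Theorem proposition2p5 (p f : nat) (mu : Xc int f)
  (sec : Xc int f -> Xc int f) :
  prime p -> (0 < f)%N ->
  (* sec is a well-defined map Lambda_W -> X^*(T) ... *)
  (forall om om' : Xc int f, eqLW om om' -> sec om = sec om') ->
  (* ... which is a section of the restriction X^*(T) -> Lambda_W *)
  (forall om : Xc int f, eqLW (sec om) om) ->
  forall (om1' om2' : Xc int f) (c1 c2 : {ffun 'I_f -> bool})
         (w1 w2 : Wf f) (om1 om2 nu1 nu2 : Xc int f),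
  in_LambdaW_mu p mu om1' -> in_LambdaW_mu p mu om2' ->
  Trns_decomp p om1' c1 w1 om1 nu1 ->
  Trns_decomp p om2' c2 w2 om2 nu2 ->
  eq_mod_pX0 p (Trns_val p mu sec w1 om1 nu1) (Trns_val p mu sec w2 om2 nu2) ->
  eqLW om1' om2' /\ c1 = c2.
Proof.
move=> p_prime _ _ sec_section om1' om2' c1 c2 w1 w2 om1 om2 nu1 nu2
  om1'_low om2'_low dec1 dec2 T12.
case: (dec1) (dec2) => [nu1_0 om1'_dec _ _] [nu2_0 om2'_dec _ _].
have T12_LW := eq_mod_pX0_eqLW T12.
split.
- have sum_dvd3 := dvd3_row_sum_sec (prime_gt1 p_prime) nu1_0 nu2_0 T12.
  have om1'_sec := eqLW_decomp_sec sec_section om1'_dec.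
  have om2'_sec := eqLW_decomp_sec sec_section om2'_dec.
  have y12 : eqLW (mu + (nu1 + sec om1)) (mu + (nu2 + sec om2)).
    apply: (lowest_alcove_rigid (q := p%:Z) (w1 := w1) (w2 := w2)
              (l1 := - piinv (sec om1)) (l2 := - piinv (sec om2))).
    + by rewrite ltz_nat prime_gt0.
    + exact: in_LambdaW_mu_row om1'_low om1'_sec.
    + exact: in_LambdaW_mu_row om2'_low om2'_sec.
    + by move=> i; rewrite !row_sumN !row_sum_piinv -opprD rpredN sum_dvd3.
    + by move: T12_LW; rewrite !Trns_valE; apply: eqLW_add2r.
  exact: eqLW_trans om1'_sec (eqLW_trans (eqLW_add2l y12) (eqLW_sym om2'_sec)).
- apply: alc_X0_eq (alc_Trns_decomp om1'_low dec1) (alc_Trns_decomp om2'_low dec2) _.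
  rewrite -map_mxB; apply/inX0_map/eqLW_piM.
  apply: eqLW_trans (eqLW_sym (eqLW_Trns_val_wt_dot p mu sec_section w1 om1'_dec)) _.
  exact: eqLW_trans T12_LW (eqLW_Trns_val_wt_dot p mu sec_section w2 om2'_dec).
Qed.
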